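(* Let $\mathcal A$ be a $C^*$-algebra with identity $1$, $\delta\colon\mathcal A\to\mathcal A$ a $^*$-endomorphism, and $\delta_*$ a complete transfer operator for $(\mathcal A,\delta)$. Suppose $\delta(1)$ lies in the center of $\mathcal A$. Then 1) both triples $(\delta,\ \delta_*(1)\mathcal A,\ \delta(1)\mathcal A)$ and $(\delta_*,\ \delta(1)\mathcal A,\ \delta_*(1)\mathcal A)$ are partial automorphisms of $\mathcal A$ (with $\delta,\delta_*$ restricted to the respective first ideals), and they are inverse to each other; 2) $\delta_*\colon\mathcal A\to\mathcal A$ is an endomorphism.
   Context: A transfer operator for $(\mathcal A,\delta)$ is a continuous positive linear map $\delta_*\colon\mathcal A\to\mathcal A$ such that $\delta_*(\delta(a)b)=a\,\delta_*(b)$ for all $a,b\in\mathcal A$; it is complete if $\delta(\delta_*(a))=\delta(1)a\delta(1)$ for all $a\in\mathcal A$. A partial automorphism of $\mathcal A$ is a triple $(\theta,I,J)$ where $I,J$ are closed two-sided ideals of $\mathcal A$ and $\theta\colon I\to J$ is a $^*$-isomorphism. *)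

From HB Require Import structures.
From mathcomp Require Import all_boot all_order all_algebra.
From mathcomp Require Import reals.
From mathcomp Require Import complex.
Set Implicit Arguments. Unset Strict Implicit. Unset Printing Implicit Defensive.
Import Order.TTheory GRing.Theory Num.Theory.
Local Open Scope ring_scope.

Section Cstar.
Variable R : realType.
Local Notation C := (R[i]).
Variables (A : algType C) (star : A -> A) (nrm : A -> R).

Definition is_unital_Cstar_algebra : Prop :=
  (forall a, star (star a) = a) /\
  (forall a b, star (a + b) = star a + star b) /\
  (forall (c : C) a, star (c *: a) = (c^*)%C *: star a) /\
  (forall a b, star (a * b) = star b * star a) /\
  (forall a, 0 <= nrm a) /\
  (forall a, nrm a = 0 -> a = 0) /\
  (forall a b, nrm (a + b) <= nrm a + nrm b) /\
  (forall (c : C) a, nrm (c *: a) = Normc.normc c * nrm a) /\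
  (forall a b, nrm (a * b) <= nrm a * nrm b) /\
  (forall a, nrm (star a * a) = nrm a ^+ 2) /\
  (forall u : nat -> A,
    (forall e : R, 0 < e -> exists N, forall m n, (N <= m)%N -> (N <= n)%N ->
        nrm (u m - u n) < e) ->
    exists l, forall e : R, 0 < e -> exists N, forall n, (N <= n)%N ->
        nrm (u n - l) < e).

Definition converges_to (u : nat -> A) (l : A) : Prop :=
  forall e : R, 0 < e -> exists N, forall n, (N <= n)%N -> nrm (u n - l) < e.

Definition norm_continuous (f : A -> A) : Prop :=
  forall a (e : R), 0 < e -> exists2 d : R, 0 < d &
    forall b, nrm (b - a) < d -> nrm (f b - f a) < e.

Definition is_linear_map (f : A -> A) : Prop :=
  forall (c : C) a b, f (c *: a + b) = c *: f a + f b.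

Definition positive_elt (a : A) : Prop := exists b, a = star b * b.

Definition positive_map (f : A -> A) : Prop :=
  is_linear_map f /\ forall a, positive_elt a -> positive_elt (f a).

(* *-endomorphism (not required to be unital) *)
Definition star_endomorphism (f : A -> A) : Prop :=
  [/\ is_linear_map f,
      (forall a b, f (a * b) = f a * f b) &
      (forall a, f (star a) = star (f a))].

Definition transfer_operator (delta dstar : A -> A) : Prop :=
  [/\ norm_continuous dstar, positive_map dstar &
      forall a b, dstar (delta a * b) = a * dstar b].

Definition complete_transfer_operator (delta dstar : A -> A) : Prop :=
  transfer_operator delta dstar /\
  forall a, delta (dstar a) = delta 1 * a * delta 1.

Definition central (z : A) : Prop := forall x, z * x = x * z.

Definition closed_ideal (I : A -> Prop) : Prop :=
  I 0 /\
  (forall a b, I a -> I b -> I (a + b)) /\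
  (forall (c : C) a, I a -> I (c *: a)) /\
  (forall a x, I a -> I (x * a) /\ I (a * x)) /\
  (forall u l, (forall n, I (u n)) -> converges_to u l -> I l).

Definition partial_automorphism (theta : A -> A) (I J : A -> Prop) : Prop :=
  closed_ideal I /\ closed_ideal J /\
  (forall a, I a -> J (theta a)) /\
  (forall (c : C) a b, I a -> I b -> theta (c *: a + b) = c *: theta a + theta b) /\
  (forall a b, I a -> I b -> theta (a * b) = theta a * theta b) /\
  (forall a, I a -> theta (star a) = star (theta a)) /\
  (forall a b, I a -> I b -> theta a = theta b -> a = b) /\
  (forall b, J b -> exists2 a, I a & theta a = b).

Definition left_mul_set (z : A) : A -> Prop := fun x => exists a, x = z * a.

End Cstar.

(* The relation delta_*(delta(a) b) = a delta_*(b) together with completeness gives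
   delta_* o delta = right multiplication by p := delta_*(1) and
   delta o delta_* = left multiplication by q := delta(1).  Both p and q are
   idempotent, and p is self-adjoint (delta_* is positive), which with
   p a p = a p forces p to be central.  Hence pA and qA are closed ideals cut out
   by central projections, on which delta and delta_* are mutually inverse; and
   delta_* is multiplicative since delta_*(a b) = delta_*(q a b)
   = delta_*(delta(delta_* a) b) = delta_* a delta_* b. *)
From HB Require Import structures.
From mathcomp Require Import all_boot all_order all_algebra.
From mathcomp Require Import reals complex.
Set Implicit Arguments. Unset Strict Implicit. Unset Printing Implicit Defensive.
Import Order.TTheory GRing.Theory Num.Theory.
Local Open Scope ring_scope.

Section CentralProjection.
Variables (R : realType) (A : algType R[i]) (nrm : A -> R) (z : A).
Hypothesis nrm_ge0 : forall a, 0 <= nrm a.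
Hypothesis nrm_eq0 : forall a, nrm a = 0 -> a = 0.
Hypothesis nrmM_le : forall a b, nrm (a * b) <= nrm a * nrm b.
Hypothesis z_central : central z.
Hypothesis z_idem : z * z = z.

Lemma left_mul_setP x : left_mul_set z x <-> z * x = x.
Proof. by split=> [[y ->]|<-]; [rewrite mulrA z_idem | exists x]. Qed.

Lemma left_mul_set_closed u l :
  (forall n, left_mul_set z (u n)) -> converges_to nrm u l -> left_mul_set z l.
Proof.
move=> u_in u_cvg; apply/left_mul_setP/eqP; rewrite -subr_eq0; apply/eqP/nrm_eq0.
set K := nrm (1 - z) + 1.
have K_gt0 : 0 < K by rewrite ltr_pwDr.
apply/eqP; rewrite eq_le nrm_ge0 andbT; apply/ler_addgt0Pr => e e_gt0.
have [N /(_ N (leqnn N)) uN_near] := u_cvg (e / K) (divr_gt0 e_gt0 K_gt0).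
have zuN : z * u N = u N by apply/left_mul_setP.
have -> : z * l - l = (1 - z) * (u N - l).
  by rewrite mulrBl mul1r mulrBr zuN opprB [RHS]addrC addrA subrK.
apply: le_trans (nrmM_le _ _) _.
rewrite add0r -[e](divfK (lt0r_neq0 K_gt0)) [e / K * K]mulrC.
by apply: ler_pM; rewrite ?nrm_ge0 ?lerDl ?ltW.
Qed.

Lemma closed_ideal_left_mul_set : closed_ideal nrm (left_mul_set z).
Proof.
split; first by exists 0; rewrite mulr0.
split; first by move=> _ _ [x ->] [y ->]; exists (x + y); rewrite mulrDr.
split; first by move=> c _ [x ->]; exists (c *: x); rewrite scalerAr.
split; last exact: left_mul_set_closed.
move=> _ x [y ->]; split; first by exists (x * y); rewrite !mulrA z_central.
by exists (y * x); rewrite mulrA.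
Qed.

End CentralProjection.

Lemma partial_automorphism_inverse (R : realType) (A : algType R[i])
    (star : A -> A) (nrm : A -> R) (f g : A -> A) (I J : A -> Prop) :
  closed_ideal nrm I -> closed_ideal nrm J -> star_endomorphism star f ->
  (forall a, I a -> J (f a)) -> (forall b, J b -> I (g b)) ->
  (forall a, I a -> g (f a) = a) -> (forall b, J b -> f (g b) = b) ->
  partial_automorphism star nrm f I J.
Proof.
move=> I_ideal J_ideal [f_lin f_mul f_star] fIJ gJI gfK fgK.
split; first exact: I_ideal.
split; first exact: J_ideal.
split; first exact: fIJ.
split; first by move=> c a b _ _; apply: f_lin.
split; first by move=> a b _ _; apply: f_mul.
split; first by move=> a _; apply: f_star.
split; first by move=> a b Ia Ib fab; rewrite -(gfK a Ia) -(gfK b Ib) fab.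
by move=> b Jb; exists (g b); [apply: gJI | apply: fgK].
Qed.

Section TransferOperator.
Variables (R : realType) (A : algType R[i]) (star : A -> A) (delta dstar : A -> A).
Hypothesis starK : forall a, star (star a) = a.
Hypothesis starM : forall a b, star (a * b) = star b * star a.
Hypothesis deltaM : forall a b, delta (a * b) = delta a * delta b.
Hypothesis delta_star : forall a, delta (star a) = star (delta a).
Hypothesis dstar_pos : forall a, positive_elt star a -> positive_elt star (dstar a).
Hypothesis dstar_deltaMl : forall a b, dstar (delta a * b) = a * dstar b.
Hypothesis delta_dstar_sandwich : forall a, delta (dstar a) = delta 1 * a * delta 1.
Hypothesis delta1_central : central (delta 1).

Local Notation p := (dstar 1).
Local Notation q := (delta 1).

Lemma star1 : star 1 = 1.
Proof. by rewrite -[star 1]mulr1 -{2}[1]starK -starM mulr1 starK. Qed.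

Lemma delta1_idem : q * q = q.
Proof. by rewrite -deltaM mulr1. Qed.

Lemma delta1_mul_delta a : q * delta a = delta a.
Proof. by rewrite -deltaM mul1r. Qed.

Lemma dstar_delta1Ml a : dstar (q * a) = dstar a.
Proof. by rewrite dstar_deltaMl mul1r. Qed.

Lemma dstar_delta a : dstar (delta a) = a * p.
Proof. by rewrite -[delta a]mulr1 dstar_deltaMl. Qed.

Lemma delta_dstar a : delta (dstar a) = q * a.
Proof. by rewrite delta_dstar_sandwich -mulrA -delta1_central mulrA delta1_idem. Qed.

Lemma dstar1_sandwich a : p * a * p = a * p.
Proof.
have delta_p : delta p = q by rewrite delta_dstar mulr1.
by rewrite -dstar_delta deltaM delta_p delta1_mul_delta dstar_delta.
Qed.

Lemma dstar1_idem : p * p = p.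
Proof. by have := dstar1_sandwich 1; rewrite mulr1 mul1r. Qed.

Lemma dstar1_selfadjoint : star p = p.
Proof.
have [b ->] : positive_elt star p by apply: dstar_pos; exists 1; rewrite star1 mulr1.
by rewrite starM starK.
Qed.

Lemma dstar1_central : central p.
Proof.
move=> a; have := congr1 star (dstar1_sandwich (star a)).
by rewrite !starM dstar1_selfadjoint starK => <-; rewrite mulrA dstar1_sandwich.
Qed.

Lemma dstar1_mul_dstar a : p * dstar a = dstar a.
Proof. by rewrite -dstar_deltaMl delta_dstar mulr1 dstar_delta1Ml. Qed.

Lemma dstar_deltaK a : left_mul_set p a -> dstar (delta a) = a.
Proof. by move=> [x ->]; rewrite dstar_delta -dstar1_central mulrA dstar1_idem. Qed.

Lemma delta_dstarK b : left_mul_set q b -> delta (dstar b) = b.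
Proof. by move=> [x ->]; rewrite delta_dstar mulrA delta1_idem. Qed.

Lemma dstarM a b : dstar (a * b) = dstar a * dstar b.
Proof. by rewrite -dstar_delta1Ml mulrA -delta_dstar dstar_deltaMl. Qed.

Lemma dstar_star a : dstar (star a) = star (dstar a).
Proof.
have star_q : star q = q by rewrite -delta_star star1.
rewrite -dstar_delta1Ml -{1}star_q -starM -delta1_central -delta_dstar.
by rewrite -delta_star dstar_delta -{1}dstar1_selfadjoint -starM dstar1_mul_dstar.
Qed.

End TransferOperator.

Theorem proposition6 (R : realType) (A : algType R[i])
    (star : A -> A) (nrm : A -> R) (delta dstar : A -> A) :
  is_unital_Cstar_algebra star nrm ->
  star_endomorphism star delta ->
  complete_transfer_operator star nrm delta dstar ->
  central (delta 1) ->
  (partial_automorphism star nrm delta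
      (left_mul_set (dstar 1)) (left_mul_set (delta 1)) /\
   partial_automorphism star nrm dstar
      (left_mul_set (delta 1)) (left_mul_set (dstar 1)) /\
   (forall a, left_mul_set (dstar 1) a -> dstar (delta a) = a) /\
   (forall b, left_mul_set (delta 1) b -> delta (dstar b) = b)) /\
  star_endomorphism star dstar.
Proof.
move=> [starK [_ [_ [starM [nrm_ge0 [nrm_eq0 [_ [_ [nrmM_le _]]]]]]]]].
move=> delta_endo [[_ [dstar_lin dstar_pos] dstar_deltaMl] sandwich] q_central.
have [_ deltaM delta_star] := delta_endo.
have dstar_endo : star_endomorphism star dstar.
  split; [exact: dstar_lin | exact: dstarM deltaM dstar_deltaMl sandwich q_central |].
  exact: (dstar_star starK starM deltaM delta_star dstar_pos dstar_deltaMl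
    sandwich q_central).
have p_central :=
  dstar1_central starK starM deltaM dstar_pos dstar_deltaMl sandwich q_central.
have p_ideal := closed_ideal_left_mul_set nrm_ge0 nrm_eq0 nrmM_le p_central
  (dstar1_idem deltaM dstar_deltaMl sandwich q_central).
have q_ideal :=
  closed_ideal_left_mul_set nrm_ge0 nrm_eq0 nrmM_le q_central (delta1_idem deltaM).
have dstar_deltaK :=
  dstar_deltaK starK starM deltaM dstar_pos dstar_deltaMl sandwich q_central.
have delta_dstarK := delta_dstarK deltaM sandwich q_central.
have delta_in a : left_mul_set (delta 1) (delta a).
  by exists (delta a); rewrite (delta1_mul_delta deltaM).
have dstar_in a : left_mul_set (dstar 1) (dstar a).
  exists (dstar a).
  by rewrite (dstar1_mul_dstar deltaM dstar_deltaMl sandwich q_central).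
split; last exact: dstar_endo.
split.
  exact: partial_automorphism_inverse p_ideal q_ideal delta_endo
    (fun a _ => delta_in a) (fun b _ => dstar_in b) dstar_deltaK delta_dstarK.
split; last exact: conj dstar_deltaK delta_dstarK.
exact: partial_automorphism_inverse q_ideal p_ideal dstar_endo
  (fun b _ => dstar_in b) (fun a _ => delta_in a) delta_dstarK dstar_deltaK.
Qed.
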